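(* For every $m\ge 0$, $$(1-x)a_{m+1}(x)=-2(1+x)(mx-2m+x-1)a_m(x)-2x(1+x)^2a_m'(x)+x(4mx-x-3)b_m(x)-4x^2(1+x)b_m'(x),$$ $$(x-1)b_{m+1}(x)=(4mx+x-1)a_m(x)-4x(1+x)a_m'(x)+(6mx-4m+x-3)(x+1)b_m(x)-2x(1+x)^2b_m'(x).$$
   Context: $P_m(x)=\sum_{i=0}^m d_i(m)x^i$ with $d_i(m)=2^{-2m}\sum_{k=i}^m 2^k\binom{2m-2k}{m-k}\binom{m+k}{k}\binom{k}{i}$; $Q_m(x)=2^m m!\,x^mP_m(1/x)$ (degree $m$). $(a_m(x),b_m(x))$ is the symmetric decomposition of $Q_m$: $a_m(x)=\frac{Q_m(x)-x^{m+1}Q_m(1/x)}{1-x}$, $b_m(x)=\frac{x^mQ_m(1/x)-Q_m(x)}{1-x}$, so $Q_m(x)=a_m(x)+xb_m(x)$. *)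

From mathcomp Require Import all_boot all_order all_algebra.
Set Implicit Arguments. Unset Strict Implicit. Unset Printing Implicit Defensive.
Import Order.TTheory GRing.Theory Num.Theory.
Local Open Scope ring_scope.

Definition dcoef (m i : nat) : rat :=
  (2%:R ^+ (2 * m))^-1 *
  \sum_(i <= k < m.+1)
     (2 ^ k * 'C(2 * m - 2 * k, m - k) * 'C(m + k, k) * 'C(k, i))%N%:R.

Definition Ppoly (m : nat) : {poly rat} := \poly_(i < m.+1) dcoef m i.

(* Q_m(x) = 2^m m! x^m P_m(1/x) = 2^m m! sum_i d_i(m) x^(m-i) *)
Definition Qpoly (m : nat) : {poly rat} :=
  \poly_(j < m.+1) ((2 ^ m * m`!)%N%:R * (Ppoly m)`_(m - j)).

(* x^m Q_m(1/x) (Q_m has degree <= m) *)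
Definition Qrev (m : nat) : {poly rat} := \poly_(j < m.+1) (Qpoly m)`_(m - j).

(* a_m(x) = (Q_m(x) - x^{m+1} Q_m(1/x)) / (1 - x)  (exact division) *)
Definition apoly (m : nat) : {poly rat} := (Qpoly m - 'X * Qrev m) %/ (1 - 'X).

(* b_m(x) = (x^m Q_m(1/x) - Q_m(x)) / (1 - x)  (exact division) *)
Definition bpoly (m : nat) : {poly rat} := (Qrev m - Qpoly m) %/ (1 - 'X).

From mathcomp Require Import all_boot all_order all_algebra.
From mathcomp Require Import ring zify.
Import Order.TTheory GRing.Theory Num.Theory.
Local Open Scope ring_scope.

(* Write e_i(m) = 2^m m! d_i(m), so that Q_m = sum_j e_(m-j)(m) x^j and its
   reversal R_m = x^m Q_m(1/x) = sum_i e_i(m) x^i.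
   1. Combinatorics.  e_i(m) = sum_k t(m,k) C(k,i), where the normalized
      summand t(m,k) = (2n)!(n+2k)!/(2^n n!^2 k!) (n = m-k) satisfies the
      Pascal-type recurrence t(m+1,k) = (2m+2k) t(m,k-1) + (2m+1-2k) t(m,k);
      with k C(k,i) = i C(k,i) + (i+1) C(k,i+1) this yields
        e_i(m+1) = (2m+2i) e_(i-1)(m) + (4m+3+2i) e_i(m).
   2. Reading this recurrence on the coefficients of R_m and of Q_m gives two
      first-order differential recurrences expressing R_(m+1) and Q_(m+1)
      through R_m, Q_m and their derivatives (Qrev_rec, Qpoly_rec).
   3. Since Q_m(1) = R_m(1), the divisions defining a_m, b_m are exact, and
      they invert to Q_m = a_m + x b_m, R_m = a_m + b_m.
   4. The theorem follows by writing (1-x) a_(m+1) = Q_(m+1) - x R_(m+1) and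
      (x-1) b_(m+1) = Q_(m+1) - R_(m+1), then substituting 2 and 3. *)

Lemma natr_factS (R : nzSemiRingType) n : (n.+1)`!%:R = n.+1%:R * n`!%:R :> R.
Proof. by rewrite factS natrM. Qed.

Lemma natr_fact_neq0 (R : numDomainType) n : n`!%:R != 0 :> R.
Proof. by rewrite pnatr_eq0 -lt0n fact_gt0. Qed.

Lemma natrS_neq0 (R : numDomainType) n : 1 + n%:R != 0 :> R.
Proof. by rewrite nat1r pnatr_eq0. Qed.

Lemma exp2_neq0 (R : numDomainType) n : 2%:R ^+ n != 0 :> R.
Proof. by rewrite expf_neq0 // pnatr_eq0. Qed.

Ltac nonzero := rewrite ?natr_fact_neq0 ?natrS_neq0 ?exp2_neq0.

Lemma natr_bin (R : numFieldType) a b : (b <= a)%N ->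
  'C(a, b)%:R = a`!%:R / (b`!%:R * (a - b)`!%:R) :> R.
Proof.
move=> le_ba; rewrite -(bin_fact le_ba) !natrM.
by field; nonzero.
Qed.

(* The normalized summand t(n+k, k) in closed form, indexed by n = m - k. *)
Definition closed_term (n k : nat) : rat :=
  (2 * n)`!%:R * (n + 2 * k)`!%:R / (2%:R ^+ n * n`!%:R ^+ 2 * k`!%:R).

Lemma closed_term_rec n j :
  closed_term n.+1 j.+1 =
  (2 * n + 4 * j + 4)%:R * closed_term n.+1 j + (2 * n + 1)%:R * closed_term n j.+1.
Proof.
rewrite /closed_term.
have -> : (2 * n.+1 = (2 * n).+2)%N by lia.
have -> : (n.+1 + 2 * j.+1 = (n + 2 * j).+3)%N by lia.
have -> : (n.+1 + 2 * j = (n + 2 * j).+1)%N by lia.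
have -> : (n + 2 * j.+1 = (n + 2 * j).+2)%N by lia.
by rewrite !natr_factS exprS; field; nonzero.
Qed.

(* Boundary cases k = 0 and k = m + 1 of the same recurrence. *)
Lemma closed_term_rec0 n : closed_term n.+1 0 = (2 * n + 1)%:R * closed_term n 0.
Proof.
rewrite /closed_term !muln0 !addn0 (_ : (2 * n.+1 = (2 * n).+2)%N); last by lia.
by rewrite !natr_factS exprS; field; nonzero.
Qed.

Lemma closed_term_rec_diag j : closed_term 0 j.+1 = (4 * j + 2)%:R * closed_term 0 j.
Proof.
rewrite /closed_term !add0n (_ : (2 * j.+1 = (2 * j).+2)%N); last by lia.
by rewrite !natr_factS; field; nonzero.
Qed.

Definition term (m k : nat) : rat := if (k <= m)%N then closed_term (m - k) k else 0.

Lemma term_out m k : (m < k)%N -> term m k = 0.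
Proof. by rewrite /term ltnNge => /negbTE ->. Qed.

Lemma term_rec m k : term m.+1 k =
  (2 * m + 2 * k)%:R * (if k is j.+1 then term m j else 0)
  + ((2 * m + 1)%:R - (2 * k)%:R) * term m k.
Proof.
case: k => [|k]; first by rewrite /term /= !subn0 closed_term_rec0; ring.
have [lt_km | lt_mk | ->] := ltngtP k m.
- have [n ->] : exists n, m = (n + k).+1 by exists (m - k.+1)%N; lia.
  rewrite /term !ifT; try lia.
  rewrite (_ : ((n + k).+2 - k.+1 = n.+1)%N); last by lia.
  rewrite (_ : ((n + k).+1 - k = n.+1)%N); last by lia.
  rewrite (_ : ((n + k).+1 - k.+1 = n)%N); last by lia.
  by rewrite closed_term_rec; ring.
- by rewrite !term_out //; [ring | lia].
- rewrite [term m m.+1]term_out // /term !leqnn !subnn closed_term_rec_diag; ring.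
Qed.

Definition ecoef (m i : nat) : rat := \sum_(k < m.+1) term m k * 'C(k, i)%:R.

Lemma ecoef_out m i : (m < i)%N -> ecoef m i = 0.
Proof.
move=> lt_mi; apply: big1 => k _.
by rewrite bin_small ?mulr0 //; exact: leq_trans (ltn_ord k) lt_mi.
Qed.

Lemma term_dcoef m k : (k <= m)%N ->
  (2 ^ m * m`!)%N%:R / 2%:R ^+ (2 * m)
  * (2 ^ k * 'C(2 * m - 2 * k, m - k) * 'C(m + k, k))%N%:R = closed_term (m - k) k.
Proof.
move=> le_km; have [n ->] : exists n, m = (n + k)%N by exists (m - k)%N; lia.
rewrite (_ : (n + k - k = n)%N); last by lia.
rewrite (_ : (2 * (n + k) - 2 * k = 2 * n)%N); last by lia.
rewrite (_ : (n + k + k = n + 2 * k)%N); last by lia.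
rewrite (_ : (2 * (n + k) = n + n + k + k)%N); last by lia.
rewrite !natrM !natrX !natr_bin; try lia.
rewrite (_ : (2 * n - n = n)%N); last by lia.
rewrite (_ : (n + 2 * k - k = n + k)%N); last by lia.
by rewrite !exprD /closed_term; field; nonzero.
Qed.

Lemma ecoef_dcoef m i : (2 ^ m * m`!)%N%:R * dcoef m i = ecoef m i.
Proof.
rewrite /dcoef /ecoef mulrA mulr_sumr big_geq_mkord big_mkcond /=.
apply: eq_bigr => -[k /=]; rewrite ltnS => le_km _; rewrite /term le_km.
case: leqP => [_ | lt_ki]; last by rewrite bin_small // mulr0.
by rewrite -(term_dcoef _ _ le_km); ring.
Qed.

Lemma bin_succ_weight (R : nzRingType) k j :
  j.+1%:R * 'C(k, j.+1)%:R = (k%:R - j%:R) * 'C(k, j)%:R :> R.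
Proof.
case: (leqP j k) => [le_jk | lt_kj]; first by rewrite -natrB // -!natrM mul_bin_left.
by rewrite !bin_small ?mulr0 //; apply: ltnW.
Qed.

Lemma ecoef_succ m i : ecoef m.+1 i =
  \sum_(k < m.+1) term m k * ((2 * m + 2 * k + 2)%:R * 'C(k.+1, i)%:R
                           + ((2 * m + 1)%:R - (2 * k)%:R) * 'C(k, i)%:R).
Proof.
rewrite /ecoef; under eq_bigr do rewrite term_rec mulrDl.
rewrite big_split /= [X in X + _]big_ord_recl [X in _ + X]big_ord_recr /=.
rewrite term_out // !mulr0 !mul0r add0r addr0.
rewrite -big_split; apply: eq_bigr => k _ /=.
rewrite /bump leq0n add1n; ring.
Qed.

Lemma ecoef_rec m i : ecoef m.+1 i =
  (2 * m + 2 * i)%:R * (if i is j.+1 then ecoef m j else 0)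
  + (4 * m + 3 + 2 * i)%:R * ecoef m i.
Proof.
rewrite ecoef_succ /ecoef; case: i => [|j].
  rewrite mulr0 add0r mulr_sumr; apply: eq_bigr => k _; rewrite !bin0; ring.
rewrite !mulr_sumr -big_split; apply: eq_bigr => k _ /=.
rewrite binS [('C(k, _) + _)%:R]natrD; have := bin_succ_weight rat k j.
move: ('C(k, j)%:R : rat) ('C(k, j.+1)%:R : rat) => c0 c1 weight.
apply/eqP; rewrite -subr_eq0; apply/eqP.
transitivity (2%:R * term m k * ((k%:R - j%:R) * c0 - j.+1%:R * c1)); first ring.
by rewrite weight subrr mulr0.
Qed.

Lemma Qpoly_coef m j : (Qpoly m)`_j = if (j <= m)%N then ecoef m (m - j) else 0.
Proof.
rewrite /Qpoly coef_poly ltnS; case: ifP => // le_jm.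
by rewrite /Ppoly coef_poly ltnS leq_subr ecoef_dcoef.
Qed.

Lemma Qrev_coef m i : (Qrev m)`_i = ecoef m i.
Proof.
rewrite /Qrev coef_poly ltnS; case: leqP => [le_im | lt_mi]; last by rewrite ecoef_out.
by rewrite Qpoly_coef leq_subr subKn.
Qed.

Lemma Qrev_coef_rec m i : (Qrev m.+1)`_i =
  (2 * m + 2 * i)%:R * ('X * Qrev m)`_i + (4 * m + 3 + 2 * i)%:R * (Qrev m)`_i.
Proof. by rewrite coefXM !Qrev_coef ecoef_rec; case: i. Qed.

Lemma Qpoly_coef_rec m j : (Qpoly m.+1)`_j =
  ((4 * m + 2)%:R - (2 * j)%:R) * (Qpoly m)`_j
  + ((6 * m + 5)%:R - (2 * j)%:R) * ('X * Qpoly m)`_j.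
Proof.
rewrite coefXM !Qpoly_coef.
have [le_jm1 | lt_m1j] := leqP j m.+1; last first.
  by do 3 (rewrite ifF; last by lia); ring.
have [i le_im1 ->] : exists2 i, (i <= m.+1)%N & j = (m.+1 - i)%N.
  by exists (m.+1 - j)%N; rewrite ?leq_subr ?subKn.
rewrite subKn // ecoef_rec.
case: i le_im1 => [|i] le_im1; first by rewrite subn0 ltnn subnn /= leqnn; ring.
rewrite ltnS in le_im1; rewrite subSS leq_subr subKn // !natrM natrB //.
have [lt_im | ->] : (i < m)%N \/ i = m by lia.
  rewrite ifF; last by lia.
  rewrite ifT; last by lia.
  by rewrite (_ : (m - (m - i).-1 = i.+1)%N); [ring | lia].
by rewrite subnn /= (ecoef_out m m.+1) //; ring.
Qed.

Lemma coef_Xderiv (R : nzRingType) (p : {poly R}) j : ('X * p^`())`_j = j%:R * p`_j.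
Proof. by rewrite coefXM coef_deriv; case: j => [|j]; rewrite ?mul0r // mulr_natl. Qed.

Lemma coef_X2deriv (R : nzRingType) (p : {poly R}) j :
  ('X * ('X * p^`()))`_j = (j%:R - 1) * ('X * p)`_j.
Proof.
rewrite [LHS]coefXM [in RHS]coefXM; case: j => [|j] /=; first by rewrite mulr0.
by rewrite coef_Xderiv -natr1 addrK.
Qed.

Lemma Qrev_rec m : Qrev m.+1 =
  (2 * m + 2)%:R * ('X * Qrev m) + (4 * m + 3)%:R * Qrev m
  + 2%:R * ('X * ('X * (Qrev m)^`())) + 2%:R * ('X * (Qrev m)^`()).
Proof.
apply/polyP => i; rewrite Qrev_coef_rec !coefD !mulr_natl !coefMn.
by rewrite coef_Xderiv coef_X2deriv; ring.
Qed.

Lemma Qpoly_rec m : Qpoly m.+1 =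
  (4 * m + 2)%:R * Qpoly m + (6 * m + 3)%:R * ('X * Qpoly m)
  - 2%:R * ('X * (Qpoly m)^`()) - 2%:R * ('X * ('X * (Qpoly m)^`())).
Proof.
apply/polyP => j; rewrite Qpoly_coef_rec !coefB !coefD !mulr_natl !coefMn.
by rewrite coef_Xderiv coef_X2deriv; ring.
Qed.

(* Q_m and its reversal have the same coefficient sum. *)
Lemma Qpoly_Qrev_at1 m : (Qpoly m).[1] = (Qrev m).[1].
Proof.
rewrite [RHS]horner_poly (horner_coef_wide _ (size_poly _ _)).
rewrite (reindex_inj rev_ord_inj) /=; apply: eq_bigr => i _.
by rewrite !expr1n !mulr1 subSS.
Qed.

Lemma one_subX_dvdp (F : fieldType) (p : {poly F}) : root p 1 -> (1 - 'X) %| p.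
Proof.
case/factor_theorem => q ->; apply/dvdpP; exists (- q).
by rewrite polyC1; ring.
Qed.

Lemma one_subX_neq0 (R : nzRingType) : (1 - 'X : {poly R}) != 0.
Proof. by rewrite -opprB oppr_eq0 -polyC1 polyXsubC_eq0. Qed.

Lemma mul_apoly m : (1 - 'X) * apoly m = Qpoly m - 'X * Qrev m.
Proof.
rewrite mulrC divpK // one_subX_dvdp //.
by rewrite /root hornerD hornerN hornerM hornerX Qpoly_Qrev_at1 mul1r subrr.
Qed.

Lemma mul_bpoly m : (1 - 'X) * bpoly m = Qrev m - Qpoly m.
Proof.
rewrite mulrC divpK // one_subX_dvdp //.
by rewrite /root hornerD hornerN Qpoly_Qrev_at1 subrr.
Qed.

Lemma Qpoly_ab m : Qpoly m = apoly m + 'X * bpoly m.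
Proof.
apply: (mulfI (one_subX_neq0 rat)).
by rewrite mulrDr mul_apoly mulrCA mul_bpoly; ring.
Qed.

Lemma Qrev_ab m : Qrev m = apoly m + bpoly m.
Proof.
apply: (mulfI (one_subX_neq0 rat)).
by rewrite mulrDr mul_apoly mul_bpoly; ring.
Qed.

Theorem lemma3p1 (m : nat) :
  (1 - 'X) * apoly m.+1 =
    - 2%:R * (1 + 'X) * (m%:R * 'X - (2 * m)%:R + 'X - 1) * apoly m
    - 2%:R * 'X * (1 + 'X) ^+ 2 * (apoly m)^`()
    + 'X * (4%:R * m%:R * 'X - 'X - 3%:R) * bpoly m
    - 4%:R * 'X ^+ 2 * (1 + 'X) * (bpoly m)^`()
  /\
  ('X - 1) * bpoly m.+1 =
    (4%:R * m%:R * 'X + 'X - 1) * apoly m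
    - 4%:R * 'X * (1 + 'X) * (apoly m)^`()
    + (6%:R * m%:R * 'X - 4%:R * m%:R + 'X - 3%:R) * ('X + 1) * bpoly m
    - 2%:R * 'X * (1 + 'X) ^+ 2 * (bpoly m)^`().
Proof.
split.
  rewrite mul_apoly Qpoly_rec Qrev_rec Qpoly_ab Qrev_ab !derivE; ring.
rewrite -opprB mulNr mul_bpoly Qpoly_rec Qrev_rec Qpoly_ab Qrev_ab !derivE; ring.
Qed.
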